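(* With notation as in the context (type $E_7$), let $\alpha$ be a positive root of $E_7$ with $\alpha\notin\Delta_7^+$, let $s\in\{1,3,4,5,6,7\}$ and let $\beta\in\Delta_s^+$. Then $f(\beta)\oplus f(\alpha)\in\Gamma_s^+$ if and only if $\beta+\alpha\in\Delta_s^+$ or $\beta-\alpha\in\Delta_s^+$.
   Context: Let $F=\{0,1,2,3\}$ be the group $\mathbb{Z}/2\times\mathbb{Z}/2$ with operation $\oplus$ (binary addition without carry) and symplectic form $(a|a')=0$ if $a=0$, $a'=0$ or $a=a'$, and $1$ otherwise. Let $V=F^3$ (elements written $abc$), with coordinatewise $\oplus$ and form $(abc|a'b'c')=(a|a')+(b|b')+(c|c')\in\mathbb{Z}/2$. Let $\Delta$ be the $E_7$ root system with simple roots $\alpha_1,\dots,\alpha_7$, $\langle\alpha_i,\alpha_i\rangle=2$, $\langle\alpha_i,\alpha_j\rangle=-1$ for $\{i,j\}\in\{\{1,3\},\{3,4\},\{4,5\},\{5,6\},\{6,7\},\{2,4\}\}$, $0$ otherwise; $\Lambda=\bigoplus\mathbb{Z}\alpha_i$, $\Delta^+$ the positive roots. Let $f:\Lambda\to V$ be the homomorphism with $f(\alpha_1)=100$, $f(\alpha_2)=030$, $f(\alpha_3)=300$, $f(\alpha_4)=111$, $f(\alpha_5)=003$, $f(\alpha_6)=001$, $f(\alpha_7)=033$. For $\beta=\sum\beta^i\alpha_i\in\Delta^+$ let $m(\beta)=\max\{i:\beta^i\ne0\}$; set $\Delta_1^+=\{\alpha_1\}$, $\Delta_3^+=\{\beta: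 m(\beta)\in\{2,3\}\}$, $\Delta_s^+=\{\beta: m(\beta)=s\}$ for $s=4,\dots,7$, and $\Gamma_s^+=f(\Delta_s^+)$. *)

From mathcomp Require Import all_boot all_order all_algebra.
Set Implicit Arguments. Unset Strict Implicit. Unset Printing Implicit Defensive.
Import GRing.Theory Num.Theory.
Local Open Scope ring_scope.

(* Root lattice Lambda of E7: coefficient vectors w.r.t. simple roots.
   Index i : 'I_7 (0-based) corresponds to alpha_{i+1}. *)
Definition lat := {ffun 'I_7 -> int}.

Definition simple (i : 'I_7) : lat := [ffun j => if j == i then 1 else 0].

(* adjacency in the E7 Dynkin diagram (1-based pairs
   {1,3},{3,4},{4,5},{5,6},{6,7},{2,4}) *)
Definition adj (i j : nat) : bool :=
  ((i, j) \in [:: (0,2); (2,3); (3,4); (4,5); (5,6); (1,3)])%N ||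
  ((j, i) \in [:: (0,2); (2,3); (3,4); (4,5); (5,6); (1,3)])%N.

Definition cartan (i j : 'I_7) : int :=
  if i == j then 2 else if adj i j then -1 else 0.

Definition form (a b : lat) : int := \sum_(i < 7) \sum_(j < 7) a i * b j * cartan i j.

(* positive roots of E7: nonzero nonnegative lattice vectors of norm 2
   (in a simply-laced root system the roots are exactly the norm-2
   vectors of the root lattice) *)
Definition pos_root (b : lat) : bool :=
  [forall i, 0 <= b i] && (b != 0) && (form b b == 2).

Definition mroot (b : lat) : nat := (\max_(i < 7 | b i != 0) i.+1)%N.

Definition Delta (s : nat) (b : lat) : bool :=
  pos_root b &&
  (if s == 1%N then b == simple ord0
   else if s == 3%N then (mroot b == 2%N) || (mroot b == 3%N)
   else mroot b == s).

(* F = Z/2 x Z/2 ; element written in binary: 0=(0,0),1=(0,1),2=(1,0),3=(1,1);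
   (+) = binary addition without carry = coordinatewise xor *)
Definition F := (bool * bool)%type.
Definition F0 : F := (false, false).
Definition F1 : F := (false, true).
Definition F2 : F := (true, false).
Definition F3 : F := (true, true).
Definition Fxor (a b : F) : F := (xorb a.1 b.1, xorb a.2 b.2).

Definition V := (F * F * F)%type.
Definition V0 : V := (F0, F0, F0).
Definition Vxor (u v : V) : V :=
  (Fxor u.1.1 v.1.1, Fxor u.1.2 v.1.2, Fxor u.2 v.2).

Definition fsimple (i : 'I_7) : V :=
  match nat_of_ord i with
  | 0 => (F1, F0, F0)
  | 1 => (F0, F3, F0)
  | 2 => (F3, F0, F0)
  | 3 => (F1, F1, F1)
  | 4 => (F0, F0, F3)
  | 5 => (F0, F0, F1)
  | _ => (F0, F3, F3)
  end%N.

(* the homomorphism f : Lambda -> V (V has exponent 2, so only parities matter) *)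
Definition f (b : lat) : V :=
  \big[Vxor/V0]_(i < 7) (if odd `|b i|%N then fsimple i else V0).

Definition Gamma (s : nat) (v : V) : Prop := exists g : lat, Delta s g /\ f g = v.

Definition latadd (a b : lat) : lat := [ffun i => a i + b i].
Definition latsub (a b : lat) : lat := [ffun i => a i - b i].

From Pilot Require Import Defs.
From mathcomp Require Import all_boot all_order all_algebra.
From mathcomp Require Import zify ring.
(* Re-import so that [form] denotes [Defs.form], not [sesquilinear.form]. *)
Import Defs.
Set Implicit Arguments. Unset Strict Implicit. Unset Printing Implicit Defensive.
Import GRing.Theory Num.Theory.
Local Open Scope ring_scope.

(* A positive root b of E7 has (b, b) = 2 and (b, w_k) = b_k for the
   fundamental weights w_k, so Cauchy-Schwarz for the positive definite
   Cartan form gives b_k ^ 2 <= 2 (w_k, w_k); this bounds every coefficient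
   of b by the corresponding coefficient of the highest root
   2a1 + 2a2 + 3a3 + 4a4 + 3a5 + 2a6 + a7.  The positive roots thus lie in a
   finite box, and filtering it yields the 63 positive roots, over which the
   criterion is decided by evaluation. *)

(* Big operators, finfuns and [inord] do not reduce under [vm_compute]; all
   computations run on coordinate lists, through the counterparts suffixed L. *)

Definition foldr_iota (R : Type) (op : R -> R -> R) (x : R) (P : pred nat)
    (F : nat -> R) (n : nat) : R :=
  foldr (fun k acc => if P k then op (F k) acc else acc) x (iota 0 n).

Lemma big_ord_foldr_iota (R : Type) (op : R -> R -> R) (x : R) (P : pred nat)
    (F : nat -> R) (n : nat) :
  \big[op/x]_(i < n | P i) F i = foldr_iota op x P F n.
Proof. by rewrite -big_mkord unlock /index_iota subn0. Qed.

Definition coords (b : lat) : seq int := [seq b (inord k) | k <- iota 0 7].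
Definition lat_of (r : seq int) : lat := [ffun i : 'I_7 => r`_i].

Lemma coords_nth (b : lat) (i : 'I_7) : (coords b)`_i = b i.
Proof. by rewrite (nth_map 0%N) ?size_iota // nth_iota // add0n inord_val. Qed.

Lemma coordsK : cancel coords lat_of.
Proof. by move=> b; apply/ffunP => i; rewrite ffunE coords_nth. Qed.

Lemma lat_ofK (r : seq int) : size r = 7%N -> coords (lat_of r) = r.
Proof.
move=> size_r; apply: (@eq_from_nth _ 0); first by rewrite size_map size_iota.
move=> k; rewrite size_map size_iota => lt_k7.
by rewrite (nth_map 0%N) ?size_iota // nth_iota // ffunE inordK.
Qed.

Definition cartanN (i j : nat) : int :=
  if i == j then 2 else if adj i j then -1 else 0.

Definition formL (x y : seq int) : int :=
  foldr_iota +%R 0 xpredT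
    (fun i => foldr_iota +%R 0 xpredT (fun j => x`_i * y`_j * cartanN i j) 7) 7.

Lemma form_coords (a b : lat) : form a b = formL (coords a) (coords b).
Proof.
rewrite /form /formL -big_ord_foldr_iota; apply: eq_bigr => i _.
rewrite -big_ord_foldr_iota; apply: eq_bigr => j _.
by rewrite !coords_nth.
Qed.

Lemma cartan_sym (i j : 'I_7) : cartan i j = cartan j i.
Proof. by rewrite /cartan eq_sym /adj orbC. Qed.

Lemma form_sym (a b : lat) : form a b = form b a.
Proof.
rewrite /form exchange_big; apply: eq_bigr => i _; apply: eq_bigr => j _.
by rewrite [cartan j i]cartan_sym [a j * _]mulrC.
Qed.

Lemma form_combl (a c : int) (x y z : lat) :
  form [ffun i => a * x i - c * y i] z = a * form x z - c * form y z.
Proof.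
rewrite /form !mulr_sumr -sumrB; apply: eq_bigr => i _.
by rewrite !mulr_sumr -sumrB; apply: eq_bigr => j _; rewrite ffunE; ring.
Qed.

Lemma form_combr (a c : int) (x y z : lat) :
  form z [ffun i => a * x i - c * y i] = a * form z x - c * form z y.
Proof. by rewrite form_sym form_combl !(form_sym z). Qed.

(* LDL^T decomposition of the Cartan matrix, eliminating along the three arms
   towards the branch node a4. *)
Lemma formL_sos (x : seq int) :
  12 * formL x x =
    6 * (2 * x`_0 - x`_2) ^+ 2 + 2 * (3 * x`_2 - 2 * x`_3) ^+ 2
  + 6 * (2 * x`_1 - x`_3) ^+ 2 + 6 * (2 * x`_6 - x`_5) ^+ 2
  + 2 * (3 * x`_5 - 2 * x`_4) ^+ 2 + (4 * x`_4 - 3 * x`_3) ^+ 2 + x`_3 ^+ 2.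
Proof. rewrite /formL /foldr_iota /cartanN /adj /=; ring. Qed.

Lemma form_ge0 (b : lat) : 0 <= form b b.
Proof.
rewrite form_coords -(pmulr_rge0 _ (_ : 0 < 12)) // formL_sos.
by rewrite !addr_ge0 ?sqr_ge0 ?(mulr_ge0 _ (sqr_ge0 _)).
Qed.

Lemma form_cauchy_schwarz (x y : lat) :
  0 < form y y -> form x y ^+ 2 <= form x x * form y y.
Proof.
move=> q_gt0; set q := form y y; set c := form x y.
have := form_ge0 [ffun i => q * x i - c * y i].
rewrite form_combl !form_combr (form_sym y x) -/c -/q.
have -> : q * (q * form x x - c * c) - c * (q * c - c * q)
          = q * (form x x * q - c ^+ 2) by ring.
by rewrite pmulr_rge0 // subr_ge0.
Qed.

(* Row k of 2 C^-1 (C the Cartan matrix), i.e. twice the fundamental weight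
   w_(k+1) in root coordinates. *)
Definition twice_fund_weight (k : nat) : seq int := nth [::]
  [:: [:: 4; 4;  6;  8;  6;  4; 2];
      [:: 4; 7;  8; 12;  9;  6; 3];
      [:: 6; 8; 12; 16; 12;  8; 4];
      [:: 8; 12; 16; 24; 18; 12; 6];
      [:: 6; 9; 12; 18; 15; 10; 5];
      [:: 4; 6;  8; 12; 10;  8; 4];
      [:: 2; 3;  4;  6;  5;  4; 3]] k.

Lemma form_twice_fund_weight (b : lat) (k : nat) : (k < 7)%N ->
  form b (lat_of (twice_fund_weight k)) = 2 * b (inord k).
Proof.
rewrite form_coords.
by case: k => [|[|[|[|[|[|[|//]]]]]]] _; rewrite lat_ofK //;
  rewrite /formL /foldr_iota /cartanN /adj /=; ring.
Qed.

Definition highest_root : seq nat := [:: 2; 2; 3; 4; 3; 2; 1].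

Lemma twice_fund_weight_diag_lt (k : nat) : (k < 7)%N ->
  0 < (twice_fund_weight k)`_k < ((nth 0 highest_root k).+1)%:Z ^+ 2.
Proof. by case: k => [|[|[|[|[|[|[|//]]]]]]]. Qed.

Lemma pos_root_le_highest (b : lat) (k : nat) : (k < 7)%N -> pos_root b ->
  b (inord k) <= (nth 0 highest_root k)%:Z.
Proof.
move=> lt_k7 /andP[_ /eqP bb2]; set w := lat_of (twice_fund_weight k).
have ww : form w w = 2 * (twice_fund_weight k)`_k.
  by rewrite form_twice_fund_weight // ffunE inordK.
have /andP[d_gt0 d_lt] := twice_fund_weight_diag_lt lt_k7.
have := @form_cauchy_schwarz b w.
rewrite ww form_twice_fund_weight // bb2 pmulr_rgt0 // => /(_ d_gt0); nia.
Qed.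

Fixpoint box (bs : seq nat) : seq (seq int) :=
  if bs is n :: bs' then [seq k%:Z :: r | k <- iota 0 n.+1, r <- box bs']
  else [:: [::]].

Lemma size_box (bs : seq nat) (r : seq int) : r \in box bs -> size r = size bs.
Proof.
elim: bs r => [|n bs IHbs] r; first by rewrite inE => /eqP ->.
by case/allpairsP => -[k r'] [_ /IHbs size_r' ->] /=; rewrite size_r'.
Qed.

Lemma mem_box (bs : seq nat) (r : seq int) : size r = size bs ->
  (forall k, (k < size bs)%N -> 0 <= r`_k <= (nth 0 bs k)%:Z) -> r \in box bs.
Proof.
elim: bs r => [|n bs IHbs] [|x r] // [size_r] r_in.
have /= /andP[x_ge0 x_le] := r_in 0%N isT.
have x_in : `|x|%N \in iota 0 n.+1.
  by rewrite mem_iota leq0n add0n ltnS -lez_nat gez0_abs.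
have r_box : r \in box bs by apply: IHbs => // k lt_k; apply: (r_in k.+1).
by have := allpairs_f (fun k r => k%:Z :: r) x_in r_box; rewrite gez0_abs.
Qed.

Definition pos_rootL (r : seq int) : bool :=
  all (fun x => 0 <= x) r && (r != nseq 7 0) && (formL r r == 2).

Definition mrootL (r : seq int) : nat :=
  foldr_iota maxn 0%N (fun k => r`_k != 0) succn 7.

Definition fL (r : seq int) : V :=
  foldr_iota Vxor V0 xpredT
    (fun k => if odd (absz r`_k) then fsimple (inZp k) else V0) 7.

Definition DeltaL (s : nat) (r : seq int) : bool :=
  pos_rootL r &&
  (if s == 1%N then r == [:: 1; 0; 0; 0; 0; 0; 0]
   else if s == 3%N then (mrootL r == 2%N) || (mrootL r == 3%N)
   else mrootL r == s).

Definition coordwise (op : int -> int -> int) (x y : seq int) : seq int :=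
  [seq op x`_k y`_k | k <- iota 0 7].

Lemma coords0 : coords 0 = nseq 7 0.
Proof. by rewrite /coords /= !ffunE. Qed.

Lemma coords_simple0 : coords (simple ord0) = [:: 1; 0; 0; 0; 0; 0; 0].
Proof. by rewrite /coords /= !ffunE -!val_eqE /= !inordK. Qed.

Lemma coords_latadd (a b : lat) :
  coords (latadd a b) = coordwise +%R (coords a) (coords b).
Proof. by rewrite /coords /= !ffunE. Qed.

Lemma coords_latsub (a b : lat) :
  coords (latsub a b) = coordwise (fun x y => x - y) (coords a) (coords b).
Proof. by rewrite /coords /= !ffunE. Qed.

Lemma pos_root_coords (b : lat) : pos_root b = pos_rootL (coords b).
Proof.
rewrite /pos_root /pos_rootL -form_coords -coords0 (can_eq coordsK).
congr (_ && _ && _); apply/forallP/allP => [b_ge0 _ /mapP[k _ ->] | ge0 i].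
  exact: b_ge0.
by rewrite -coords_nth ge0 // mem_nth // size_map size_iota.
Qed.

Lemma mroot_coords (b : lat) : mroot b = mrootL (coords b).
Proof.
rewrite /mroot /mrootL -big_ord_foldr_iota.
by apply: eq_bigl => i; rewrite coords_nth.
Qed.

Lemma f_coords (b : lat) : f b = fL (coords b).
Proof.
rewrite /f /fL -big_ord_foldr_iota; apply: eq_bigr => i _.
by rewrite coords_nth valZpK.
Qed.

Lemma Delta_coords (s : nat) (b : lat) : Delta s b = DeltaL s (coords b).
Proof.
rewrite /Delta /DeltaL pos_root_coords mroot_coords -coords_simple0.
by rewrite (can_eq coordsK).
Qed.

Definition E7_pos_roots : seq (seq int) :=
  [seq r <- box highest_root | pos_rootL r].

Lemma coords_pos_root (b : lat) : pos_root b -> coords b \in E7_pos_roots.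
Proof.
move=> b_pos; rewrite mem_filter -pos_root_coords b_pos andTb.
apply: mem_box; first by rewrite size_map size_iota.
move=> k lt_k7; rewrite (nth_map 0%N) ?size_iota // nth_iota // add0n.
rewrite pos_root_le_highest // andbT.
by move: b_pos => /andP[/andP[/forallP b_ge0 _] _]; apply: b_ge0.
Qed.

Lemma GammaE (s : nat) (v : V) :
  Gamma s v <-> v \in [seq fL r | r <- E7_pos_roots & DeltaL s r].
Proof.
split=> [[g [g_s <-]] | /mapP[r]].
  apply/mapP; exists (coords g); last exact: f_coords.
  by rewrite mem_filter -Delta_coords g_s coords_pos_root //; case/andP: g_s.
rewrite !mem_filter => /andP[r_s /andP[_ /size_box size_r]] ->.
by exists (lat_of r); rewrite Delta_coords f_coords lat_ofK.
Qed.

Definition sum_diff_criterion (roots : seq (seq int)) : bool :=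
  all (fun s =>
    let Delta_s := [seq r <- roots | DeltaL s r] in
    let Gamma_s := map fL Delta_s in
    all (fun a => all (fun b =>
      (Vxor (fL b) (fL a) \in Gamma_s) ==
      DeltaL s (coordwise +%R b a)
      || DeltaL s (coordwise (fun x y => x - y) b a))
      Delta_s) [seq a <- roots | ~~ DeltaL 7 a])
  [:: 1; 3; 4; 5; 6; 7]%N.

Lemma E7_sum_diff_criterion : sum_diff_criterion E7_pos_roots.
Proof. by vm_compute. Qed.

Theorem mainTheorem11 (alpha beta : lat) (s : nat) :
  (s \in [:: 1; 3; 4; 5; 6; 7])%N ->
  pos_root alpha -> ~~ Delta 7 alpha ->
  Delta s beta ->
  (Gamma s (Vxor (f beta) (f alpha)) <->
   Delta s (latadd beta alpha) \/ Delta s (latsub beta alpha)).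
Proof.
move=> s_in /coords_pos_root alpha_in.
rewrite !Delta_coords GammaE !f_coords coords_latadd coords_latsub.
move=> alpha_7 beta_s.
have beta_in : coords beta \in E7_pos_roots.
  by apply: coords_pos_root; rewrite pos_root_coords; case/andP: beta_s.
have /allP/(_ s s_in)/allP/(_ (coords alpha)) := E7_sum_diff_criterion.
rewrite mem_filter alpha_7 alpha_in => /(_ isT)/allP/(_ (coords beta)).
rewrite mem_filter beta_s beta_in => /(_ isT)/eqP ->.
by split=> /orP.
Qed.
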